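(* Let $\mathcal{H}$ be a complex Hilbert space and $x,y,e\in\mathcal{H}$ with $\|e\|=1$. Then for every $0\le\alpha\le1$, $$|\langle x,e\rangle\langle e,y\rangle|^2\le \frac{1+\alpha}{4}\|x\|^2\|y\|^2+\frac{1-\alpha}{4}|\langle x,y\rangle|^2+\frac12\|x\|\,\|y\|\,|\langle x,y\rangle|.$$
   Context: $\langle\cdot,\cdot\rangle$ is the inner product of $\mathcal{H}$ and $\|\cdot\|$ the induced norm. *)

From HB Require Import structures.
From mathcomp Require Import all_boot all_order all_algebra.
From mathcomp Require Import complex.
From mathcomp Require Import reals.
Set Implicit Arguments. Unset Strict Implicit. Unset Printing Implicit Defensive.
Import Order.TTheory GRing.Theory Num.Theory.
Local Open Scope ring_scope.

Record is_inner_product (R : rcfType) (V : lmodType (complex R))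
    (ip : V -> V -> complex R) : Prop := {
  ip_linearl : forall (a : complex R) (x y z : V),
      ip (a *: x + y) z = a * ip x z + ip y z;
  ip_conjsym : forall x y : V, ip y x = (ip x y)^*;
  ip_ge0 : forall x : V, 0 <= ip x x;
  ip_eq0 : forall x : V, ip x x = 0 -> x = 0
}.

(* induced norm ||x|| = sqrt <x,x> (a nonnegative real, viewed in complex R) *)
Definition ipnorm (R : rcfType) (V : lmodType (complex R))
    (ip : V -> V -> complex R) (x : V) : complex R := sqrtC (ip x x).

Definition ip_complete (R : rcfType) (V : lmodType (complex R))
    (ip : V -> V -> complex R) : Prop :=
  forall u : nat -> V,
    (forall eps : complex R, 0 < eps -> exists N : nat, forall m n : nat,
        (N <= m)%N -> (N <= n)%N -> ipnorm ip (u m - u n) < eps) ->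
    exists l : V, forall eps : complex R, 0 < eps -> exists N : nat,
        forall n : nat, (N <= n)%N -> ipnorm ip (u n - l) < eps.

Definition is_hilbert (R : rcfType) (V : lmodType (complex R))
    (ip : V -> V -> complex R) : Prop :=
  is_inner_product ip /\ ip_complete ip.

From HB Require Import structures.
From mathcomp Require Import all_boot all_order all_algebra.
From mathcomp Require Import complex.
From mathcomp Require Import reals.
From mathcomp Require Import ring.
Import Order.TTheory GRing.Theory Num.Theory.
Local Open Scope ring_scope.

Section InnerProduct.
Context {R : rcfType} {V : lmodType (complex R)} {ip : V -> V -> complex R}.
Hypothesis hI : is_inner_product ip.

Lemma ip0l (z : V) : ip 0 z = 0.
Proof.
have := ip_linearl hI 1 0 0 z.
rewrite scale1r addr0 mul1r => h.
by apply: (addrI (ip 0 z)); rewrite addr0 -h.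
Qed.

Lemma ip0r (z : V) : ip z 0 = 0.
Proof. by rewrite (ip_conjsym hI) ip0l conjC0. Qed.

Lemma ipl (a b : complex R) (x y z : V) :
  ip (a *: x + b *: y) z = a * ip x z + b * ip y z.
Proof.
rewrite (ip_linearl hI); congr (_ + _).
by have := ip_linearl hI b y 0 z; rewrite addr0 ip0l addr0.
Qed.

Lemma ipr (a b : complex R) (x y z : V) :
  ip z (a *: x + b *: y) = a^* * ip z x + b^* * ip z y.
Proof.
by rewrite (ip_conjsym hI) ipl rmorphD !rmorphM /= -!(ip_conjsym hI).
Qed.

Lemma ipnorm_ge0 (x : V) : 0 <= ipnorm ip x.
Proof. by rewrite sqrtC_ge0 (ip_ge0 hI). Qed.

Lemma ipnorm_sq (x : V) : ipnorm ip x ^+ 2 = ip x x.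
Proof. exact: sqrtCK. Qed.

Lemma cauchy_schwarz_sq (u v : V) : `|ip u v| ^+ 2 <= ip u u * ip v v.
Proof.
set c := ip v v; set d := ip u v.
have c_ge0 : 0 <= c by apply: (ip_ge0 hI).
have := ip_ge0 hI (c *: u + (- d) *: v).
rewrite ipl !ipr geC0_conj // rmorphN /=.
have -> : ip v u = d^* by rewrite (ip_conjsym hI).
have -> : c * (c * ip u u + - d^* * d) + - d * (c * d^* + - d^* * c)
   = c * (c * ip u u - d * d^*) by ring.
rewrite -normCK.
have [c0 _|c_neq0] := eqVneq c 0.
  have v0 : v = 0 by apply: (ip_eq0 hI).
  by rewrite /d v0 ip0r normr0 expr0n /= c0 mulr0.
have c_gt0 : 0 < c by rewrite lt_def c_neq0 c_ge0.
by rewrite pmulr_rge0 // subr_ge0 mulrC.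
Qed.

Lemma cauchy_schwarz (u v : V) : `|ip u v| <= ipnorm ip u * ipnorm ip v.
Proof.
rewrite -(ler_pXn2r (isT : (0 < 2)%N)) ?nnegrE ?mulr_ge0 ?ipnorm_ge0 //.
by rewrite exprMn !ipnorm_sq cauchy_schwarz_sq.
Qed.

(* Buzano's inequality, via the reflection of x along the unit vector e. *)
Lemma buzano (x y e : V) : ip e e = 1 ->
  2 * `|ip x e * ip e y| <= ipnorm ip x * ipnorm ip y + `|ip x y|.
Proof.
move=> ee1; set a := ip x e.
set z := (2 * a) *: e + (-1) *: x.
have norm_z : ipnorm ip z = ipnorm ip x.
  congr sqrtC; rewrite /z ipl !ipr ee1.
  have -> : ip e x = a^* by rewrite (ip_conjsym hI).
  rewrite rmorphN rmorph1 rmorphM /= (rmorph_nat _ 2) -/a.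
  ring.
have zy : ip z y = 2 * (a * ip e y) - ip x y by rewrite /z ipl mulN1r mulrA.
have -> : 2 * `|a * ip e y| = `|ip z y + ip x y|.
  by rewrite zy subrK [RHS]normrM ger0_norm ?ler0n.
rewrite -norm_z.
by apply: (le_trans (ler_normD _ _)); rewrite lerD // cauchy_schwarz.
Qed.

End InnerProduct.

(* The elementary interpolation inequality between the two Buzano-type
   bounds s^2 <= A^2 and s^2 <= ((A+B)/2)^2, in any ordered field. *)
Lemma interpolation_bound {F : numFieldType} (A B s a : F) :
  0 <= B -> B <= A -> 0 <= s -> 2 * s <= A + B -> 0 <= a ->
  s ^+ 2 <= (1 + a) / 4 * A ^+ 2 + (1 - a) / 4 * B ^+ 2 + 1 / 2 * (A * B).
Proof.
move=> B_ge0 BA s_ge0 sAB a_ge0.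
have A_ge0 : 0 <= A := le_trans B_ge0 BA.
have sq_mono (u v : F) : 0 <= u -> u <= v -> u ^+ 2 <= v ^+ 2.
  by move=> u0 uv; rewrite ler_pXn2r ?nnegrE // (le_trans u0 uv).
have B2A2 : B ^+ 2 <= A ^+ 2 := sq_mono _ _ B_ge0 BA.
have s2AB : (2 * s) ^+ 2 <= (A + B) ^+ 2.
  by apply: sq_mono sAB; rewrite mulr_ge0 ?ler0n.
rewrite -subr_ge0.
have -> : (1 + a) / 4 * A ^+ 2 + (1 - a) / 4 * B ^+ 2 + 1 / 2 * (A * B) - s ^+ 2
    = ((A + B) ^+ 2 - (2 * s) ^+ 2) / 4 + a * (A ^+ 2 - B ^+ 2) / 4.
  by field.
by rewrite addr_ge0 ?divr_ge0 ?mulr_ge0 ?ler0n // subr_ge0.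
Qed.

Theorem mainTheorem9 (R : realType) (V : lmodType (complex R))
    (ip : V -> V -> complex R) (hH : is_hilbert ip)
    (x y e : V) (he : ipnorm ip e = 1)
    (alpha : R) (ha0 : 0 <= alpha) (ha1 : alpha <= 1) :
  `|ip x e * ip e y| ^+ 2 <=
    (1 + (alpha%:C)%C) / 4 * (ipnorm ip x ^+ 2 * ipnorm ip y ^+ 2)
    + (1 - (alpha%:C)%C) / 4 * `|ip x y| ^+ 2
    + 1 / 2 * (ipnorm ip x * ipnorm ip y * `|ip x y|).
Proof.
have hI := hH.1.
have ee1 : ip e e = 1 by rewrite -ipnorm_sq he expr1n.
rewrite -exprMn; apply: interpolation_bound.
- exact: normr_ge0.
- exact: cauchy_schwarz.
- exact: normr_ge0.
- exact: buzano.
- by rewrite lecE /= eqxx ha0.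
Qed.
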